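(* Suppose Assumptions 1–4 hold and $p$ is convex. Suppose also that $p(Q)=0$ for some $Q>0$ and that the ratio $\mu=\partial_+p(0)/\partial_-p(Q)$ is finite. Then every Cournot candidate $\mathbf{x}$ satisfies $\gamma(\mathbf{x})\ge f(\mu)$.
   Context: Cournot model: $N$ suppliers, inverse demand $p:[0,\infty)\to[0,\infty)$, supplier $n$ has cost $C_n:[0,\infty)\to[0,\infty)$ and chooses $x_n\ge0$; $X=\sum_n x_n$. $\partial_\pm$ denote right/left derivatives; $C_n'(0)$ is the right derivative at $0$. Assumption 1: each $C_n$ is convex, continuous, nondecreasing on $[0,\infty)$, continuously differentiable on $(0,\infty)$, with $C_n(0)=0$. Assumption 2: $p$ is continuous, nonnegative, nonincreasing, $p(0)>0$; its right derivative at $0$ exists and at every $q>0$ its left and right derivatives exist. Assumption 3: there exists $R>0$ such that $p(R)\le\min_n C_n'(0)$. Assumption 4: $p(0)>\min_n C_n'(0)$. Social welfare of $\mathbf{x}\ge0$: $W(\mathbf{x})=\int_0^X p(q)\,dq-\sum_{n=1}^N C_n(x_n)$; a social optimum $\mathbf{x}^S$ maximizes $W$. Efficiency: $\gamma(\mathbf{x})=W(\mathbf{x})/W(\mathbf{x}^S)$. A nonnegative vector $\mathbf{x}$ is a Cournot candidate if for every $n$: $C_n'(x_n)\le p(X)+x_n\,\partial_-p(X)$ whenever $x_n>0$, and $C_n'(x_n)\ge p(X)+x_n\,\partial_+p(X)$. For $\overline c\ge1$: $f(\overline c)=\dfrac{\phi^2+2}{\phi^2+2\phi+\overline c}$ with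 $\phi=\max\left\{\dfrac{2-\overline c+\sqrt{\overline c^{\,2}-4\overline c+12}}{2},1\right\}$. *)

From Stdlib Require Import Reals Lra ClassicalEpsilon.
Open Scope R_scope.

Fixpoint sumN (f : nat -> R) (N : nat) : R :=
  match N with
  | O => 0
  | S k => sumN f k + f k
  end.

Definition right_deriv (f : R -> R) (x l : R) : Prop :=
  forall eps, 0 < eps -> exists delta, 0 < delta /\
    forall h, 0 < h < delta -> Rabs ((f (x + h) - f x) / h - l) < eps.

Definition left_deriv (f : R -> R) (x l : R) : Prop :=
  forall eps, 0 < eps -> exists delta, 0 < delta /\
    forall h, - delta < h < 0 -> Rabs ((f (x + h) - f x) / h - l) < eps.

Definition convex_nonneg (f : R -> R) : Prop :=
  forall x y t, 0 <= x -> 0 <= y -> 0 <= t <= 1 ->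
    f (t * x + (1 - t) * y) <= t * f x + (1 - t) * f y.

Definition continuous_nonneg (f : R -> R) : Prop :=
  forall x, 0 <= x -> forall eps, 0 < eps -> exists delta, 0 < delta /\
    forall y, 0 <= y -> Rabs (y - x) < delta -> Rabs (f y - f x) < eps.

Definition nondecreasing_nonneg (f : R -> R) : Prop :=
  forall x y, 0 <= x -> x <= y -> f x <= f y.

Definition nonincreasing_nonneg (f : R -> R) : Prop :=
  forall x y, 0 <= x -> x <= y -> f y <= f x.

(* Assumption 1.  dC n is the derivative of C n: C_n'(x) for x > 0,
   and the right derivative at 0 for x = 0. *)
Definition Assumption1 (N : nat) (C dC : nat -> R -> R) : Prop :=
  forall n, (n < N)%nat ->
    convex_nonneg (C n) /\ continuous_nonneg (C n) /\
    nondecreasing_nonneg (C n) /\ (forall x, 0 <= x -> 0 <= C n x) /\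
    C n 0 = 0 /\
    right_deriv (C n) 0 (dC n 0) /\
    (forall x, 0 < x -> derivable_pt_lim (C n) x (dC n x)) /\
    (forall x, 0 < x -> continuity_pt (dC n) x).

(* Assumption 2.  dpR q = right derivative of p at q >= 0,
   dpL q = left derivative of p at q > 0. *)
Definition Assumption2 (p dpL dpR : R -> R) : Prop :=
  continuous_nonneg p /\ (forall q, 0 <= q -> 0 <= p q) /\
  nonincreasing_nonneg p /\ 0 < p 0 /\
  right_deriv p 0 (dpR 0) /\
  (forall q, 0 < q -> left_deriv p q (dpL q) /\ right_deriv p q (dpR q)).

Definition Assumption3 (N : nat) (p : R -> R) (dC : nat -> R -> R) : Prop :=
  exists Rb, 0 < Rb /\ forall n, (n < N)%nat -> p Rb <= dC n 0.

Definition Assumption4 (N : nat) (p : R -> R) (dC : nat -> R -> R) : Prop :=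
  exists n, (n < N)%nat /\ dC n 0 < p 0.

(* Riemann integral of f over [0, b] (well defined when f is Riemann
   integrable there, e.g. continuous; RiemannInt is proof-irrelevant). *)
Definition RInt0 (f : R -> R) (b : R) : R :=
  epsilon (inhabits 0)
    (fun I => exists pr : Riemann_integrable f 0 b, RiemannInt pr = I).

Definition nonneg_profile (N : nat) (x : nat -> R) : Prop :=
  forall n, (n < N)%nat -> 0 <= x n.

Definition welfare (N : nat) (p : R -> R) (C : nat -> R -> R) (x : nat -> R) : R :=
  RInt0 p (sumN x N) - sumN (fun n => C n (x n)) N.

Definition social_optimum (N : nat) (p : R -> R) (C : nat -> R -> R)
    (xS : nat -> R) : Prop :=
  nonneg_profile N xS /\
  forall y, nonneg_profile N y -> welfare N p C y <= welfare N p C xS.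

Definition efficiency (N : nat) (p : R -> R) (C : nat -> R -> R)
    (x xS : nat -> R) : R :=
  welfare N p C x / welfare N p C xS.

Definition cournot_candidate (N : nat) (p dpL dpR : R -> R)
    (dC : nat -> R -> R) (x : nat -> R) : Prop :=
  nonneg_profile N x /\
  forall n, (n < N)%nat ->
    (0 < x n -> dC n (x n) <= p (sumN x N) + x n * dpL (sumN x N)) /\
    p (sumN x N) + x n * dpR (sumN x N) <= dC n (x n).

Definition phi_f (c : R) : R :=
  Rmax ((2 - c + sqrt (c ^ 2 - 4 * c + 12)) / 2) 1.

Definition f_bound (c : R) : R :=
  (phi_f c ^ 2 + 2) / (phi_f c ^ 2 + 2 * phi_f c + c).

(* Write X for the total output of x, d = -p'_-(X), g = -p'_-(Q), so that
   0 <= d <= mu g by monotonicity of the derivatives of p; let c = C_j'(x_j) be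
   the least marginal cost at x, r = x_j, s = max(0, p(X) - c) <= r d, the rents
   k_n = C_n'(x_n) x_n - C_n(x_n) >= 0 with sum K, and I = int_0^X p - p(X) X.
   - The first-order conditions give W(x) >= I + d sum_n x_n^2 + K.
   - Convex costs lie above their tangents at x, so any profile has welfare at
     most sup_Y (int_0^Y p - c Y) + K; convexity of p puts p on [X, oo) below the
     tent c + max(0, s - g (q - X)), whence W(xS) <= I + s X + s^2/(2g) + K.
   - Convexity also gives I >= d X^2 / 2, and f(mu) satisfies
     f(mu) (X^2 + 2 r X + mu r^2) <= X^2 + 2 r^2 for 0 <= r <= X, which closes
     the comparison of the two bounds.
   The file develops finite sums, one-sided derivatives and convexity, integral
   bounds, facts on the demand, the welfare bounds and the function f, and then
   derives the corollary. *)

From Stdlib Require Import Reals Lra Psatz Lia ClassicalEpsilon.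
From Coquelicot Require Import Coquelicot.
Open Scope R_scope.

Lemma sumN_le (f g : nat -> R) (N : nat) :
  (forall n, (n < N)%nat -> f n <= g n) -> sumN f N <= sumN g N.
Proof.
  induction N as [|N IH]; simpl; intros H; [lra|].
  pose proof (H N ltac:(lia)). pose proof (IH ltac:(intros; apply H; lia)). lra.
Qed.

Lemma sumN_plus (f g : nat -> R) (N : nat) :
  sumN (fun n => f n + g n) N = sumN f N + sumN g N.
Proof. induction N as [|N IH]; simpl; [lra|]. rewrite IH; lra. Qed.

Lemma sumN_scal (k : R) (f : nat -> R) (N : nat) :
  sumN (fun n => k * f n) N = k * sumN f N.
Proof. induction N as [|N IH]; simpl; [lra|]. rewrite IH; lra. Qed.

Lemma sumN_nonneg (f : nat -> R) (N : nat) :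
  (forall n, (n < N)%nat -> 0 <= f n) -> 0 <= sumN f N.
Proof.
  intros H. apply Rle_trans with (sumN (fun _ => 0) N); [|exact (sumN_le _ _ N H)].
  clear H; induction N as [|N IH]; simpl; lra.
Qed.

Lemma sumN_term (f : nat -> R) (N j : nat) :
  (forall n, (n < N)%nat -> 0 <= f n) -> (j < N)%nat -> f j <= sumN f N.
Proof.
  induction N as [|N IH]; simpl; intros H Hj; [lia|].
  destruct (Nat.eq_dec j N) as [->|Hne].
  - pose proof (sumN_nonneg f N ltac:(intros; apply H; lia)). lra.
  - pose proof (H N ltac:(lia)). pose proof (IH ltac:(intros; apply H; lia) ltac:(lia)). lra.
Qed.

Lemma sumN_single (f : nat -> R) (N j : nat) : (j < N)%nat ->
  (forall n, (n < N)%nat -> n <> j -> f n = 0) -> sumN f N = f j.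
Proof.
  induction N as [|N IH]; simpl; intros Hj H; [lia|].
  destruct (Nat.eq_dec j N) as [->|Hne].
  - enough (sumN f N = 0) by lra.
    apply Rle_antisym.
    + apply Rle_trans with (sumN (fun _ => 0) N).
      * apply sumN_le; intros n Hn; rewrite H by lia; lra.
      * clear; induction N; simpl; lra.
    + apply sumN_nonneg; intros n Hn; rewrite H by lia; lra.
  - rewrite IH, (H N) by (lia || intros; apply H; lia). lra.
Qed.

Lemma argmin (a : nat -> R) (N : nat) : (0 < N)%nat ->
  exists j, (j < N)%nat /\ forall n, (n < N)%nat -> a j <= a n.
Proof.
  induction N as [|N IH]; intros H; [lia|].
  destruct (Nat.eq_dec N 0) as [->|HN0].
  - exists 0%nat; split; [lia|]. intros n Hn; replace n with 0%nat by lia; lra.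
  - destruct (IH ltac:(lia)) as [j [Hj Hmin]].
    destruct (Rle_dec (a j) (a N)) as [Hle|Hgt].
    + exists j; split; [lia|]. intros n Hn.
      destruct (Nat.eq_dec n N) as [->|]; [assumption|]. apply Hmin; lia.
    + exists N; split; [lia|]. intros n Hn.
      destruct (Nat.eq_dec n N) as [->|]; [lra|]. pose proof (Hmin n ltac:(lia)). lra.
Qed.

Lemma right_limit_le (q : R -> R) (l K d0 : R) :
  (forall eps, 0 < eps -> exists delta, 0 < delta /\
     forall h, 0 < h < delta -> Rabs (q h - l) < eps) ->
  0 < d0 -> (forall h, 0 < h < d0 -> q h <= K) -> l <= K.
Proof.
  intros Hlim Hd0 Hbound. destruct (Rle_dec l K) as [|Hgt]; [assumption|].
  destruct (Hlim (l - K)) as [delta [Hdelta Hclose]]; [lra|].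
  set (h := Rmin delta d0 / 2).
  assert (Hh : 0 < h < delta /\ h < d0) by (unfold h, Rmin; destruct Rle_dec; lra).
  specialize (Hclose h ltac:(lra)). specialize (Hbound h ltac:(lra)).
  apply Rabs_def2 in Hclose. lra.
Qed.

Lemma right_deriv_le (f : R -> R) (a l K d0 : R) : right_deriv f a l -> 0 < d0 ->
  (forall h, 0 < h < d0 -> f (a + h) - f a <= K * h) -> l <= K.
Proof.
  intros Hd Hd0 Hinc. apply (right_limit_le (fun h => (f (a + h) - f a) / h) l K d0 Hd Hd0).
  intros h Hh. apply Rle_div_l; [lra|]. now apply Hinc.
Qed.

Lemma right_deriv_ge (f : R -> R) (a l K d0 : R) : right_deriv f a l -> 0 < d0 ->
  (forall h, 0 < h < d0 -> K * h <= f (a + h) - f a) -> K <= l.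
Proof.
  intros Hd Hd0 Hinc. apply Ropp_le_cancel.
  apply (right_limit_le (fun h => - ((f (a + h) - f a) / h)) (- l) (- K) d0); [|assumption|].
  - intros eps Heps. destruct (Hd eps Heps) as [delta [Hdelta Hclose]].
    exists delta; split; [assumption|]. intros h Hh.
    rewrite <- Rabs_Ropp. replace (- (- ((f (a + h) - f a) / h) - - l))
      with ((f (a + h) - f a) / h - l) by ring. now apply Hclose.
  - intros h Hh. apply Ropp_le_contravar. apply Rle_div_r; [lra|]. now apply Hinc.
Qed.

Lemma left_deriv_backward (f : R -> R) (a l : R) : left_deriv f a l ->
  forall eps, 0 < eps -> exists delta, 0 < delta /\
    forall h, 0 < h < delta -> Rabs ((f a - f (a - h)) / h - l) < eps.
Proof.
  intros Hd eps Heps. destruct (Hd eps Heps) as [delta [Hdelta Hclose]].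
  exists delta; split; [assumption|]. intros h Hh.
  specialize (Hclose (- h) ltac:(lra)).
  replace (a + - h) with (a - h) in Hclose by ring.
  replace ((f a - f (a - h)) / h) with ((f (a - h) - f a) / - h) by (field; lra).
  exact Hclose.
Qed.

Lemma left_deriv_le (f : R -> R) (a l K d0 : R) : left_deriv f a l -> 0 < d0 ->
  (forall h, 0 < h < d0 -> f a - f (a - h) <= K * h) -> l <= K.
Proof.
  intros Hd Hd0 Hinc.
  apply (right_limit_le (fun h => (f a - f (a - h)) / h) l K d0); [now apply left_deriv_backward|assumption|].
  intros h Hh. apply Rle_div_l; [lra|]. now apply Hinc.
Qed.

Lemma left_deriv_ge (f : R -> R) (a l K d0 : R) : left_deriv f a l -> 0 < d0 ->
  (forall h, 0 < h < d0 -> K * h <= f a - f (a - h)) -> K <= l.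
Proof.
  intros Hd Hd0 Hinc. apply Ropp_le_cancel.
  apply (right_limit_le (fun h => - ((f a - f (a - h)) / h)) (- l) (- K) d0); [|assumption|].
  - intros eps Heps. destruct (left_deriv_backward f a l Hd eps Heps) as [delta [Hdelta Hclose]].
    exists delta; split; [assumption|]. intros h Hh.
    rewrite <- Rabs_Ropp. replace (- (- ((f a - f (a - h)) / h) - - l))
      with ((f a - f (a - h)) / h - l) by ring. now apply Hclose.
  - intros h Hh. apply Ropp_le_contravar. apply Rle_div_r; [lra|]. now apply Hinc.
Qed.

Lemma derivable_right_deriv (f : R -> R) (a l : R) :
  derivable_pt_lim f a l -> right_deriv f a l.
Proof.
  intros H eps Heps. destruct (H eps Heps) as [[delta Hdelta] Hclose].
  exists delta; split; [assumption|]. intros h Hh.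
  apply Hclose; [lra|]. simpl. rewrite Rabs_right; lra.
Qed.

Lemma derivable_left_deriv (f : R -> R) (a l : R) :
  derivable_pt_lim f a l -> left_deriv f a l.
Proof.
  intros H eps Heps. destruct (H eps Heps) as [[delta Hdelta] Hclose].
  exists delta; split; [assumption|]. intros h Hh.
  apply Hclose; [lra|]. simpl. rewrite Rabs_left; lra.
Qed.

Lemma nondecreasing_right_deriv_nonneg (f : R -> R) (a l : R) :
  nondecreasing_nonneg f -> right_deriv f a l -> 0 <= a -> 0 <= l.
Proof.
  intros Hf Hd Ha. apply (right_deriv_ge f a l 0 1 Hd); [lra|].
  intros h Hh. pose proof (Hf a (a + h) Ha ltac:(lra)). lra.
Qed.

Lemma nonincreasing_left_deriv_nonpos (f : R -> R) (a l : R) :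
  nonincreasing_nonneg f -> left_deriv f a l -> 0 < a -> l <= 0.
Proof.
  intros Hf Hd Ha. apply (left_deriv_le f a l 0 a Hd Ha).
  intros h Hh. pose proof (Hf (a - h) a ltac:(lra) ltac:(lra)). lra.
Qed.

Lemma convex_chord (f : R -> R) (a b c : R) : convex_nonneg f ->
  0 <= a -> a < b -> b < c -> (c - a) * f b <= (c - b) * f a + (b - a) * f c.
Proof.
  intros Hf Ha Hab Hbc.
  set (t := (c - b) / (c - a)).
  assert (Ht : 0 <= t <= 1).
  { unfold t; split.
    - apply Rdiv_le_0_compat; lra.
    - apply Rle_div_l; lra. }
  pose proof (Hf a c t Ha ltac:(lra) Ht) as Hconv.
  replace (t * a + (1 - t) * c) with b in Hconv by (unfold t; field; lra).
  apply (Rmult_le_compat_l (c - a)) in Hconv; [|lra].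
  replace ((c - a) * (t * f a + (1 - t) * f c)) with ((c - b) * f a + (b - a) * f c)
    in Hconv by (unfold t; field; lra).
  exact Hconv.
Qed.

Lemma convex_right_tangent (f : R -> R) (a b l : R) : convex_nonneg f ->
  right_deriv f a l -> 0 <= a -> a < b -> f a + l * (b - a) <= f b.
Proof.
  intros Hf Hd Ha Hab.
  assert (Hl : l <= (f b - f a) / (b - a)).
  { apply (right_deriv_le f a l _ (b - a) Hd); [lra|].
    intros h Hh. pose proof (convex_chord f a (a + h) b Hf Ha ltac:(lra) ltac:(lra)).
    replace ((f b - f a) / (b - a) * h) with ((f b - f a) * h / (b - a)) by (field; lra).
    apply Rle_div_r; [lra|]. nra. }
  apply Rle_div_r in Hl; lra.
Qed.

Lemma convex_left_secant (f : R -> R) (a b l : R) : convex_nonneg f ->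
  left_deriv f b l -> 0 <= a -> a < b -> f b - f a <= l * (b - a).
Proof.
  intros Hf Hd Ha Hab.
  assert (Hl : (f b - f a) / (b - a) <= l).
  { apply (left_deriv_ge f b l _ (b - a) Hd); [lra|].
    intros h Hh. pose proof (convex_chord f a (b - h) b Hf Ha ltac:(lra) ltac:(lra)).
    replace ((f b - f a) / (b - a) * h) with ((f b - f a) * h / (b - a)) by (field; lra).
    apply Rle_div_l; [lra|]. nra. }
  apply Rle_div_l in Hl; lra.
Qed.

Lemma convex_left_tangent (f : R -> R) (b c l : R) : convex_nonneg f ->
  left_deriv f b l -> 0 < b -> b < c -> l * (c - b) <= f c - f b.
Proof.
  intros Hf Hd Hb Hbc.
  assert (Hl : l <= (f c - f b) / (c - b)).
  { apply (left_deriv_le f b l _ b Hd Hb).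
    intros h Hh. pose proof (convex_chord f (b - h) b c Hf ltac:(lra) ltac:(lra) Hbc).
    replace ((f c - f b) / (c - b) * h) with ((f c - f b) * h / (c - b)) by (field; lra).
    apply Rle_div_r; [lra|]. nra. }
  apply Rle_div_r in Hl; lra.
Qed.

Lemma convex_left_le_right (f : R -> R) (b l r : R) : convex_nonneg f ->
  left_deriv f b l -> right_deriv f b r -> 0 < b -> l <= r.
Proof.
  intros Hf Hl Hr Hb. apply (right_deriv_ge f b r l 1 Hr); [lra|].
  intros h Hh. pose proof (convex_left_tangent f b (b + h) l Hf Hl Hb ltac:(lra)). nra.
Qed.

Lemma convex_deriv_mono (f : R -> R) (a b r l : R) : convex_nonneg f ->
  right_deriv f a r -> left_deriv f b l -> 0 <= a -> a < b -> r <= l.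
Proof.
  intros Hf Hr Hl Ha Hab.
  pose proof (convex_right_tangent f a b r Hf Hr Ha Hab).
  pose proof (convex_left_secant f a b l Hf Hl Ha Hab). nra.
Qed.

Lemma convex_below_line (f : R -> R) (X q Q l : R) : convex_nonneg f ->
  left_deriv f Q l -> 0 <= X -> X <= q <= Q -> f q <= f X + l * (q - X).
Proof.
  intros Hf Hd HX Hq.
  destruct (Rle_lt_or_eq_dec X q ltac:(lra)) as [HXq|HXq]; [|subst q; lra].
  destruct (Rle_lt_or_eq_dec q Q ltac:(lra)) as [HqQ|HqQ]; [|subst q].
  - pose proof (convex_chord f X q Q Hf HX HXq HqQ).
    pose proof (convex_left_secant f X Q l Hf Hd HX ltac:(lra)). nra.
  - pose proof (convex_left_secant f X Q l Hf Hd HX HXq). lra.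
Qed.

Lemma convex_support (f : R -> R) (x y l : R) : convex_nonneg f -> 0 <= x -> 0 <= y ->
  right_deriv f x l -> (0 < x -> left_deriv f x l) -> f x + l * (y - x) <= f y.
Proof.
  intros Hf Hx Hy Hr Hl.
  destruct (Rtotal_order x y) as [Hxy|[Hxy|Hyx]].
  - now apply convex_right_tangent.
  - subst y; lra.
  - pose proof (convex_left_secant f y x l Hf (Hl ltac:(lra)) Hy Hyx). nra.
Qed.

Lemma continuous_nonneg_extend (f : R -> R) : continuous_nonneg f ->
  forall z, continuous (fun q => f (Rmax 0 q)) z.
Proof.
  intros Hf z. apply continuity_pt_filterlim.
  intros eps Heps.
  destruct (Hf (Rmax 0 z) (Rmax_l 0 z) eps Heps) as [delta [Hdelta Hclose]].
  exists delta; split; [assumption|].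
  intros y [_ Hy]. simpl in *. unfold R_dist in *.
  apply Hclose; [apply Rmax_l|].
  eapply Rle_lt_trans; [|exact Hy].
  unfold Rmax; destruct (Rle_dec 0 y), (Rle_dec 0 z);
    unfold Rabs; repeat destruct Rcase_abs; lra.
Qed.

Lemma continuous_nonneg_ex_RInt (f : R -> R) (a b : R) : continuous_nonneg f ->
  0 <= a -> 0 <= b -> ex_RInt f a b.
Proof.
  intros Hf Ha Hb.
  apply (ex_RInt_ext (fun q => f (Rmax 0 q))).
  - intros q Hq. f_equal. apply Rmax_right.
    unfold Rmin in Hq. destruct (Rle_dec a b); lra.
  - apply (@ex_RInt_continuous R_CompleteNormedModule).
    intros z _. now apply continuous_nonneg_extend.
Qed.

Lemma RInt0_RInt (f : R -> R) (b : R) : continuous_nonneg f -> 0 <= b ->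
  RInt0 f b = RInt f 0 b.
Proof.
  intros Hf Hb. unfold RInt0.
  assert (Hint : Riemann_integrable f 0 b).
  { apply ex_RInt_Reals_0. apply continuous_nonneg_ex_RInt; lra || assumption. }
  destruct (epsilon_spec (inhabits 0)
    (fun I => exists pr : Riemann_integrable f 0 b, RiemannInt pr = I))
    as [pr Hpr]; [now exists (RiemannInt Hint), Hint|].
  rewrite <- Hpr. symmetry. apply RInt_Reals.
Qed.

Lemma RInt_split (f : R -> R) (a b : R) : continuous_nonneg f -> 0 <= a -> 0 <= b ->
  RInt f 0 b = RInt f 0 a + RInt f a b.
Proof.
  intros Hf Ha Hb. symmetry.
  apply (@RInt_Chasles R_CompleteNormedModule);
    apply continuous_nonneg_ex_RInt; lra || assumption.
Qed.

Lemma is_RInt_affine (al be a b : R) :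
  is_RInt (fun q => al + be * q) a b (al * (b - a) + be * (b * b - a * a) / 2).
Proof.
  set (F := fun q => al * q + be * (q * q) / 2).
  replace (al * (b - a) + be * (b * b - a * a) / 2) with (minus (F b) (F a))
    by (unfold F, minus, plus, opp; simpl; field).
  apply (@is_RInt_derive R_CompleteNormedModule).
  - intros q _. unfold F. auto_derive; [exact I|]. field.
  - intros q _. apply (@continuous_plus R_UniformSpace R_AbsRing R_NormedModule); [apply continuous_const|].
    apply (@continuous_mult R_UniformSpace R_AbsRing); [apply continuous_const|apply continuous_id].
Qed.

Lemma RInt_le_affine (f : R -> R) (al be a b : R) : continuous_nonneg f -> 0 <= a <= b ->
  (forall q, a < q < b -> f q <= al + be * q) ->
  RInt f a b <= al * (b - a) + be * (b * b - a * a) / 2.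
Proof.
  intros Hf Hab Hle. rewrite <- (is_RInt_unique _ _ _ _ (is_RInt_affine al be a b)).
  apply RInt_le; [lra| apply continuous_nonneg_ex_RInt; lra || assumption
                 | eexists; apply is_RInt_affine | assumption].
Qed.

Lemma RInt_ge_affine (f : R -> R) (al be a b : R) : continuous_nonneg f -> 0 <= a <= b ->
  (forall q, a < q < b -> al + be * q <= f q) ->
  al * (b - a) + be * (b * b - a * a) / 2 <= RInt f a b.
Proof.
  intros Hf Hab Hge. rewrite <- (is_RInt_unique _ _ _ _ (is_RInt_affine al be a b)).
  apply RInt_le; [lra| eexists; apply is_RInt_affine
                 | apply continuous_nonneg_ex_RInt; lra || assumption | assumption].
Qed.

(* Below a "tent" c + max(0, s - g (q - X)), the excess of the integral over
   c (Y - X) is at most the area s^2/(2g) of the triangle. *)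
Lemma RInt_tent (h : R -> R) (X Y c s g : R) : continuous_nonneg h ->
  0 <= X <= Y -> 0 <= s -> 0 < g ->
  (forall q, X < q < Y -> h q <= c + Rmax 0 (s - g * (q - X))) ->
  RInt h X Y <= c * (Y - X) + s ^ 2 / (2 * g).
Proof.
  intros Hh HXY Hs Hg Htent.
  set (Z := X + s / g).
  assert (Hgs : g * (Z - X) = s) by (unfold Z; field; lra).
  assert (HZ : X <= Z) by (unfold Z; pose proof (Rdiv_le_0_compat s g Hs Hg); lra).
  (* On [X, min(Y, Z)] the tent is the line c + s - g (q - X). *)
  assert (Hslope : forall T, X <= T <= Z -> T <= Y ->
            RInt h X T <= c * (T - X) + s ^ 2 / (2 * g)).
  { intros T HT HTY.
    assert (Hint : RInt h X T <= (c + s + g * X) * (T - X) + (- g) * (T * T - X * X) / 2).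
    { apply RInt_le_affine; [assumption|lra|]. intros q Hq.
      specialize (Htent q ltac:(lra)). rewrite Rmax_right in Htent by nra. lra. }
    assert (0 <= (s - g * (T - X)) ^ 2 / (2 * g))
      by (apply Rdiv_le_0_compat; [apply pow2_ge_0|lra]).
    replace ((s - g * (T - X)) ^ 2 / (2 * g)) with
      (s ^ 2 / (2 * g) - s * (T - X) + g * (T - X) ^ 2 / 2) in * by (field; lra).
    nra. }
  destruct (Rle_dec Y Z) as [HYZ|HZY]; [apply Hslope; lra|].
  (* Beyond Z the tent is the constant c. *)
  assert (Hflat : RInt h Z Y <= c * (Y - Z) + 0 * (Y * Y - Z * Z) / 2).
  { apply RInt_le_affine; [assumption|lra|]. intros q Hq.
    specialize (Htent q ltac:(lra)). rewrite Rmax_left in Htent by nra. lra. }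
  pose proof (Hslope Z ltac:(lra) ltac:(lra)).
  rewrite <- (RInt_Chasles h X Z Y); try (apply continuous_nonneg_ex_RInt; lra || assumption).
  unfold plus; simpl. lra.
Qed.

Lemma net_surplus_bound (h : R -> R) (X Y c s g : R) : continuous_nonneg h ->
  0 <= X -> 0 <= Y -> 0 <= s -> h X - c <= s -> 0 < g ->
  (forall q, 0 <= q <= X -> h X <= h q) ->
  (forall q, X <= q -> h q <= c + Rmax 0 (s - g * (q - X))) ->
  RInt h 0 Y - c * Y <= RInt h 0 X - h X * X + s * X + s ^ 2 / (2 * g).
Proof.
  intros Hh HX HY Hs Hgap Hg Habove Hbelow.
  assert (Harea : 0 <= s ^ 2 / (2 * g)) by (apply Rdiv_le_0_compat; [apply pow2_ge_0|lra]).
  destruct (Rle_dec Y X) as [HYX|HXY].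
  - rewrite (RInt_split h Y X Hh HY HX).
    assert (RInt h Y X >= h X * (X - Y) + 0 * (X * X - Y * Y) / 2).
    { apply Rle_ge, RInt_ge_affine; [assumption|lra|]. intros q Hq.
      pose proof (Habove q ltac:(lra)). lra. }
    nra.
  - rewrite (RInt_split h X Y Hh HX HY).
    pose proof (RInt_tent h X Y c s g Hh ltac:(lra) Hs Hg ltac:(intros q Hq; apply Hbelow; lra)).
    nra.
Qed.

Lemma demand_slopes (p dpL dpR : R -> R) (X Q : R) :
  Assumption2 p dpL dpR -> convex_nonneg p -> 0 < X -> 0 < Q -> dpL Q <> 0 ->
  dpR 0 <= dpL X <= 0 /\ dpL X <= dpR X /\ dpR 0 <= dpL Q < 0.
Proof.
  intros [_ [_ [Hmono [_ [HdR0 Hpd]]]]] Hconv HX HQ HdQ.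
  destruct (Hpd X HX) as [HlX HrX]. destruct (Hpd Q HQ) as [HlQ _].
  pose proof (nonincreasing_left_deriv_nonpos p X _ Hmono HlX HX).
  pose proof (nonincreasing_left_deriv_nonpos p Q _ Hmono HlQ HQ).
  pose proof (convex_left_le_right p X _ _ Hconv HlX HrX HX).
  pose proof (convex_deriv_mono p 0 X _ _ Hconv HdR0 HlX ltac:(lra) HX).
  pose proof (convex_deriv_mono p 0 Q _ _ Hconv HdR0 HlQ ltac:(lra) HQ).
  repeat split; lra.
Qed.

Lemma slope_ratio (d0 dX dQ : R) : d0 <= dQ < 0 -> d0 <= dX ->
  1 <= d0 / dQ /\ - dX <= d0 / dQ * - dQ.
Proof.
  intros HdQ HdX.
  assert (Hmu : d0 / dQ * dQ = d0) by (field; lra).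
  split; nra.
Qed.

(* Below p(X), convexity bounds the inframarginal surplus from below by the
   triangle under the left tangent at X. *)
Lemma inframarginal_surplus_lower (p : R -> R) (X l : R) :
  continuous_nonneg p -> convex_nonneg p -> left_deriv p X l -> 0 < X ->
  - l * X ^ 2 / 2 <= RInt p 0 X - p X * X.
Proof.
  intros Hp Hconv Hl HX.
  assert (Hint : (p X - l * X) * (X - 0) + l * (X * X - 0 * 0) / 2 <= RInt p 0 X).
  { apply RInt_ge_affine; [assumption|lra|]. intros q Hq.
    pose proof (convex_left_secant p q X l Hconv Hl ltac:(lra) ltac:(lra)). nra. }
  nra.
Qed.

Lemma price_below_tent (p : R -> R) (X Q q c s g : R) : convex_nonneg p ->
  nonincreasing_nonneg p -> 0 <= Q -> left_deriv p Q (- g) -> p Q = 0 ->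
  0 <= X -> 0 <= c -> p X - c <= s -> X <= q ->
  p q <= c + Rmax 0 (s - g * (q - X)).
Proof.
  intros Hconv Hmono HQ HlQ HpQ HX Hc Hgap Hq.
  destruct (Rle_dec Q q) as [HQq|HqQ].
  - pose proof (Hmono Q q ltac:(lra) HQq). pose proof (Rmax_l 0 (s - g * (q - X))). lra.
  - pose proof (convex_below_line p X q Q (- g) Hconv HlQ HX ltac:(lra)).
    pose proof (Rmax_r 0 (s - g * (q - X))). lra.
Qed.

Definition rent (C dC : nat -> R -> R) (x : nat -> R) (n : nat) : R :=
  dC n (x n) * x n - C n (x n).

Lemma cost_right_deriv (N : nat) (C dC : nat -> R -> R) (n : nat) (z : R) :
  Assumption1 N C dC -> (n < N)%nat -> 0 <= z -> right_deriv (C n) z (dC n z).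
Proof.
  intros HA1 Hn Hz. destruct (HA1 n Hn) as [_ [_ [_ [_ [_ [Hr0 [Hd _]]]]]]].
  destruct (Rle_lt_or_eq_dec 0 z Hz) as [Hpos|<-]; [|assumption].
  now apply derivable_right_deriv, Hd.
Qed.

Lemma cost_support (N : nat) (C dC : nat -> R -> R) (n : nat) (z y : R) :
  Assumption1 N C dC -> (n < N)%nat -> 0 <= z -> 0 <= y ->
  C n z + dC n z * (y - z) <= C n y.
Proof.
  intros HA1 Hn Hz Hy. destruct (HA1 n Hn) as [Hconv [_ [_ [_ [_ [_ [Hd _]]]]]]].
  apply convex_support; try assumption.
  - now apply (cost_right_deriv N).
  - intros Hpos. now apply derivable_left_deriv, Hd.
Qed.

Lemma marginal_cost_nonneg (N : nat) (C dC : nat -> R -> R) (n : nat) (z : R) :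
  Assumption1 N C dC -> (n < N)%nat -> 0 <= z -> 0 <= dC n z.
Proof.
  intros HA1 Hn Hz. destruct (HA1 n Hn) as [_ [_ [Hmono _]]].
  apply (nondecreasing_right_deriv_nonneg (C n) z); try assumption.
  now apply (cost_right_deriv N).
Qed.

(* Rents are nonnegative: the tangent at x_n passes below C_n(0) = 0. *)
Lemma rent_nonneg (N : nat) (C dC : nat -> R -> R) (x : nat -> R) (n : nat) :
  Assumption1 N C dC -> nonneg_profile N x -> (n < N)%nat -> 0 <= rent C dC x n.
Proof.
  intros HA1 Hx Hn. pose proof (cost_support N C dC n (x n) 0 HA1 Hn (Hx n Hn) ltac:(lra)).
  destruct (HA1 n Hn) as [_ [_ [_ [_ [HC0 _]]]]]. unfold rent. lra.
Qed.

(* At a candidate some supplier produces: if X = 0, the supplier of Assumption 4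
   would violate C_n'(0) >= p(0). *)
Lemma candidate_output_pos (N : nat) (dC : nat -> R -> R) (p dpL dpR : R -> R)
    (x : nat -> R) : Assumption4 N p dC -> cournot_candidate N p dpL dpR dC x ->
  0 < sumN x N.
Proof.
  intros [n0 [Hn0 Hprofit]] [Hx Hfoc].
  assert (HX : 0 <= sumN x N) by now apply sumN_nonneg.
  destruct (Rle_lt_or_eq_dec 0 _ HX) as [|HX0]; [assumption|exfalso].
  pose proof (sumN_term x N n0 Hx Hn0). pose proof (Hx n0 Hn0).
  assert (Hx0 : x n0 = 0) by lra.
  destruct (Hfoc n0 Hn0) as [_ Hlower]. rewrite <- HX0, Hx0 in Hlower. lra.
Qed.

(* The markup of each supplier at a candidate is at most x_n |p'_-(X)|, by the
   second first-order condition C_n'(x_n) >= p(X) + x_n p'_+(X). *)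
Lemma candidate_markup_bound (N : nat) (dC : nat -> R -> R) (p dpL dpR : R -> R)
    (x : nat -> R) (n : nat) : cournot_candidate N p dpL dpR dC x ->
  dpL (sumN x N) <= dpR (sumN x N) -> (n < N)%nat ->
  p (sumN x N) - dC n (x n) <= x n * - dpL (sumN x N).
Proof.
  intros [Hx Hfoc] Hlr Hn. destruct (Hfoc n Hn) as [_ Hlow].
  pose proof (Rmult_le_compat_l (x n) _ _ (Hx n Hn) Hlr). lra.
Qed.

(* Lower bound on the welfare of a candidate, from the first-order conditions
   C_n'(x_n) <= p(X) + x_n p'_-(X). *)
Lemma candidate_welfare_lower (N : nat) (C dC : nat -> R -> R) (p dpL dpR : R -> R)
    (x : nat -> R) : continuous_nonneg p -> cournot_candidate N p dpL dpR dC x ->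
  RInt p 0 (sumN x N) - p (sumN x N) * sumN x N
    - dpL (sumN x N) * sumN (fun n => x n * x n) N + sumN (rent C dC x) N
    <= welfare N p C x.
Proof.
  intros Hp [Hx Hfoc]. set (X := sumN x N) in *.
  assert (Hcost : sumN (fun n => C n (x n)) N <=
    sumN (fun n => (p X * x n + dpL X * (x n * x n)) + (-1) * rent C dC x n) N).
  { apply sumN_le. intros n Hn. destruct (Hfoc n Hn) as [Hupper _].
    assert (dC n (x n) * x n <= p X * x n + dpL X * (x n * x n)).
    { destruct (Rle_lt_or_eq_dec 0 (x n) (Hx n Hn)) as [Hpos|<-]; [|lra].
      pose proof (Hupper Hpos). nra. }
    unfold rent. lra. }
  rewrite !sumN_plus, !sumN_scal in Hcost.
  unfold welfare. rewrite RInt0_RInt by (try apply sumN_nonneg; assumption).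
  fold X in Hcost |- *. lra.
Qed.

(* Upper bound on the welfare of any profile: costs lie above their tangents at x,
   whose slopes are at least c; the bound B on the net surplus int_0^Y p - c Y
   then controls every profile. *)
Lemma welfare_upper (N : nat) (C dC : nat -> R -> R) (p : R -> R) (x y : nat -> R)
    (c B : R) : Assumption1 N C dC -> continuous_nonneg p ->
  nonneg_profile N x -> nonneg_profile N y ->
  (forall n, (n < N)%nat -> c <= dC n (x n)) ->
  (forall Y, 0 <= Y -> RInt p 0 Y - c * Y <= B) ->
  welfare N p C y <= B + sumN (rent C dC x) N.
Proof.
  intros HA1 Hp Hx Hy Hc HB.
  assert (Hcost : sumN (fun n => c * y n + (-1) * rent C dC x n) N
                  <= sumN (fun n => C n (y n)) N).
  { apply sumN_le. intros n Hn.
    pose proof (cost_support N C dC n (x n) (y n) HA1 Hn (Hx n Hn) (Hy n Hn)).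
    pose proof (Rmult_le_compat_r (y n) _ _ (Hy n Hn) (Hc n Hn)).
    unfold rent. lra. }
  rewrite sumN_plus, !sumN_scal in Hcost.
  assert (HY : 0 <= sumN y N) by now apply sumN_nonneg.
  pose proof (HB (sumN y N) HY).
  unfold welfare. rewrite RInt0_RInt by assumption. lra.
Qed.

Lemma welfare_upper_convex_demand (N : nat) (C dC : nat -> R -> R) (p : R -> R)
    (x y : nat -> R) (Q c s g : R) :
  Assumption1 N C dC -> continuous_nonneg p -> convex_nonneg p -> nonincreasing_nonneg p ->
  0 <= Q -> left_deriv p Q (- g) -> p Q = 0 -> 0 < g ->
  nonneg_profile N x -> nonneg_profile N y -> 0 <= c ->
  (forall n, (n < N)%nat -> c <= dC n (x n)) ->
  0 <= s -> p (sumN x N) - c <= s ->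
  welfare N p C y <= RInt p 0 (sumN x N) - p (sumN x N) * sumN x N
    + s * sumN x N + s ^ 2 / (2 * g) + sumN (rent C dC x) N.
Proof.
  intros HA1 Hp Hconv Hmono HQ HlQ HpQ Hg Hx Hy Hc Hmin Hs Hgap. set (X := sumN x N) in *.
  assert (HX : 0 <= X) by now apply sumN_nonneg.
  apply (welfare_upper N C dC p x y c); try assumption.
  intros Y HY. apply net_surplus_bound; try assumption.
  - intros q Hq. now apply Hmono.
  - intros q Hq. now apply (price_below_tent p X Q q c s g).
Qed.

(* The optimal welfare is positive: a small output eps of the supplier with
   C_n'(0) < p(0) already yields positive welfare. *)
Lemma optimal_welfare_pos (N : nat) (C dC : nat -> R -> R) (p : R -> R)
    (xS : nat -> R) : Assumption1 N C dC -> continuous_nonneg p ->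
  Assumption4 N p dC -> social_optimum N p C xS -> 0 < welfare N p C xS.
Proof.
  intros HA1 Hp [n0 [Hn0 Hprofit]] [_ Hopt].
  set (del := (p 0 - dC n0 0) / 3).
  assert (Hdel : 0 < del) by (unfold del; lra).
  destruct (HA1 n0 Hn0) as [_ [_ [_ [_ [HC0 [Hr0 _]]]]]].
  destruct (Hp 0 ltac:(lra) del Hdel) as [dp [Hdp Hpclose]].
  destruct (Hr0 del Hdel) as [dc [Hdc Hcclose]].
  set (eps := Rmin dp dc / 2).
  assert (Heps : 0 < eps < dp /\ eps < dc) by (unfold eps, Rmin; destruct Rle_dec; lra).
  (* Near 0, p stays above p(0) - del and C_n0 below (C_n0'(0) + del) q. *)
  assert (Hsurplus : (p 0 - del) * (eps - 0) + 0 * (eps * eps - 0 * 0) / 2 <= RInt p 0 eps).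
  { apply RInt_ge_affine; [assumption|lra|]. intros q Hq.
    assert (Hnear : Rabs (q - 0) < dp) by (rewrite Rminus_0_r, Rabs_right; lra).
    specialize (Hpclose q ltac:(lra) Hnear). apply Rabs_def2 in Hpclose. lra. }
  assert (Hcost : C n0 eps < (dC n0 0 + del) * eps).
  { specialize (Hcclose eps ltac:(lra)). rewrite Rplus_0_l, HC0, Rminus_0_r in Hcclose.
    apply Rabs_def2 in Hcclose.
    assert (Hquot : C n0 eps / eps < dC n0 0 + del) by lra.
    now apply Rlt_div_l in Hquot; [|lra]. }
  set (y := fun n => if Nat.eq_dec n n0 then eps else 0).
  assert (Hy : nonneg_profile N y) by (intros n Hn; unfold y; destruct Nat.eq_dec; lra).
  assert (HWy : 0 < welfare N p C y).
  { unfold welfare.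
    rewrite (sumN_single y N n0 Hn0) by (intros n Hn Hne; unfold y; now destruct Nat.eq_dec).
    rewrite (sumN_single (fun n => C n (y n)) N n0 Hn0).
    2:{ intros n Hn Hne. unfold y. destruct Nat.eq_dec; [lia|].
        now destruct (HA1 n Hn) as [_ [_ [_ [_ [-> _]]]]]. }
    unfold y. destruct Nat.eq_dec; [|lia].
    rewrite RInt0_RInt by (assumption || lra).
    unfold del in *. nra. }
  pose proof (Hopt y Hy). lra.
Qed.

(* phi(m) >= 1 is the positive root of phi^2 + (m - 2) phi - 2, unless that root
   is below 1, which happens exactly when m >= 3 and then phi(m) = 1. *)
Lemma phi_f_spec (m : R) : 1 <= m ->
  1 <= phi_f m /\
  (phi_f m ^ 2 + (m - 2) * phi_f m - 2 = 0 \/ (phi_f m = 1 /\ 3 <= m)).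
Proof.
  intros Hm. unfold phi_f.
  set (s := sqrt (m ^ 2 - 4 * m + 12)).
  assert (Hs : s * s = m ^ 2 - 4 * m + 12) by (apply sqrt_sqrt; nra).
  assert (Hs0 : 0 <= s) by apply sqrt_pos.
  unfold Rmax. destruct Rle_dec; [split; [lra|right; split; [reflexivity|nra]]|].
  split; [lra|left; nra].
Qed.

Lemma f_bound_range (m : R) : 1 <= m -> 0 < f_bound m <= 1.
Proof.
  intros Hm. unfold f_bound. destruct (phi_f_spec m Hm) as [Hphi _].
  set (ph := phi_f m) in *.
  split; [apply Rdiv_lt_0_compat; nra|].
  apply Rle_div_l; nra.
Qed.

(* The inequality defining f: for 0 <= r <= X,
   f(m) (X^2 + 2 r X + m r^2) <= X^2 + 2 r^2. *)
Lemma f_bound_key (m X r : R) : 1 <= m -> 0 <= r -> r <= X ->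
  f_bound m * (X ^ 2 + 2 * r * X + m * r ^ 2) <= X ^ 2 + 2 * r ^ 2.
Proof.
  intros Hm Hr HX. unfold f_bound.
  destruct (phi_f_spec m Hm) as [Hphi Hroot]. set (ph := phi_f m) in *.
  assert (Hden : 0 < ph ^ 2 + 2 * ph + m) by nra.
  replace ((ph ^ 2 + 2) / (ph ^ 2 + 2 * ph + m) * (X ^ 2 + 2 * r * X + m * r ^ 2))
    with ((X ^ 2 + 2 * r * X + m * r ^ 2) * (ph ^ 2 + 2) / (ph ^ 2 + 2 * ph + m))
    by (field; lra).
  apply Rle_div_l; [lra|].
  (* The gap factors as (X - ph r) times a second factor. *)
  assert (Hgap : (X ^ 2 + 2 * r ^ 2) * (ph ^ 2 + 2 * ph + m)
                 - (X ^ 2 + 2 * r * X + m * r ^ 2) * (ph ^ 2 + 2)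
               = (X - ph * r) * (2 * X * ph + (m - 2) * (X + ph * r) - 4 * r)) by ring.
  destruct Hroot as [Hroot | [Hph Hm3]].
  - assert (Hsq : ph * ((X - ph * r) * (2 * X * ph + (m - 2) * (X + ph * r) - 4 * r))
                  = (ph ^ 2 + 2) * (X - ph * r) ^ 2).
    { transitivity ((ph ^ 2 + 2) * (X - ph * r) ^ 2
                    + (X - ph * r) * (X + r * ph) * (ph ^ 2 + (m - 2) * ph - 2)); [ring|].
      rewrite Hroot; ring. }
    assert (0 <= (X - ph * r) * (2 * X * ph + (m - 2) * (X + ph * r) - 4 * r)).
    { apply (Rmult_le_reg_l ph); [lra|]. rewrite Rmult_0_r, Hsq.
      apply Rmult_le_pos; [nra|apply pow2_ge_0]. }
    lra.
  - rewrite Hph in Hgap |- *.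
    assert (0 <= (X - 1 * r) * (2 * X * 1 + (m - 2) * (X + 1 * r) - 4 * r))
      by (apply Rmult_le_pos; nra).
    lra.
Qed.

Lemma efficiency_from_bounds (mu g d r X I K S2 s Wx Ws : R) :
  1 <= mu -> 0 < g -> 0 <= d <= mu * g -> 0 <= r <= X -> r * r <= S2 ->
  d * X ^ 2 / 2 <= I -> 0 <= K -> 0 <= s <= r * d ->
  I + d * S2 + K <= Wx -> 0 < Ws -> Ws <= I + s * X + s ^ 2 / (2 * g) + K ->
  f_bound mu <= Wx / Ws.
Proof.
  intros Hmu Hg Hd Hr HS2 HI HK Hs HWx HWs0 HWs.
  destruct (f_bound_range mu Hmu) as [Hf0 Hf1].
  pose proof (f_bound_key mu X r Hmu (proj1 Hr) (proj2 Hr)) as Hkey.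
  set (f := f_bound mu) in *.
  assert (Hsq : s ^ 2 / (2 * g) <= r ^ 2 * d * mu / 2).
  { apply Rle_div_l; [lra|].
    assert (s ^ 2 <= (r * d) ^ 2) by (apply pow_incr; lra).
    assert (d * d <= d * (mu * g)) by (apply Rmult_le_compat_l; lra).
    assert (0 <= r ^ 2) by apply pow2_ge_0. nra. }
  assert (HsX : s * X <= r * d * X) by (apply Rmult_le_compat_r; lra).
  apply (proj1 (Rle_div_r _ _ _ HWs0)).
  apply Rle_trans with (f * (I + r * d * X + r ^ 2 * d * mu / 2 + K)); [nra|].
  assert (0 <= (1 - f) * (I - d * X ^ 2 / 2)) by (apply Rmult_le_pos; lra).
  assert (0 <= (1 - f) * K) by (apply Rmult_le_pos; lra).
  assert (0 <= d * (S2 - r * r)) by (apply Rmult_le_pos; lra).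
  assert (0 <= d / 2 * (X ^ 2 + 2 * r ^ 2 - f * (X ^ 2 + 2 * r * X + mu * r ^ 2)))
    by (apply Rmult_le_pos; lra).
  nra.
Qed.

Theorem corollary1 (N : nat) (C dC : nat -> R -> R) (p dpL dpR : R -> R)
  (Q : R) (x : nat -> R) :
  Assumption1 N C dC ->
  Assumption2 p dpL dpR ->
  Assumption3 N p dC ->
  Assumption4 N p dC ->
  convex_nonneg p ->
  0 < Q -> p Q = 0 ->
  dpL Q <> 0 ->
  cournot_candidate N p dpL dpR dC x ->
  forall xS, social_optimum N p C xS ->
    f_bound (dpR 0 / dpL Q) <= efficiency N p C x xS.
Proof.
  intros HA1 HA2 _ HA4 Hconv HQ HpQ HdQ Hcand xS HxS.
  pose proof HA2 as [Hp [_ [Hmono [_ [_ Hpd]]]]].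
  pose proof Hcand as [Hx _].
  pose proof (candidate_output_pos N dC p dpL dpR x HA4 Hcand) as HX.
  set (X := sumN x N) in *.
  destruct (demand_slopes p dpL dpR X Q HA2 Hconv HX HQ HdQ) as [[H0X HX0] [HXlr [H0Q HQ0]]].
  destruct (slope_ratio (dpR 0) (dpL X) (dpL Q) ltac:(lra) H0X) as [Hmu Hdmu].
  destruct (Hpd Q HQ) as [HlQ _]. rewrite <- (Ropp_involutive (dpL Q)) in HlQ.
  assert (HN : (0 < N)%nat) by (destruct HA4 as [n0 [Hn0 _]]; lia).
  destruct (argmin (fun n => dC n (x n)) N HN) as [j [Hj Hmin]].
  set (c := dC j (x j)) in *.
  pose proof (marginal_cost_nonneg N C dC j (x j) HA1 Hj (Hx j Hj)) as Hc.
  pose proof (candidate_markup_bound N dC p dpL dpR x j Hcand HXlr Hj) as Hmarkup.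
  fold X c in Hmarkup.
  set (s := Rmax 0 (p X - c)).
  unfold efficiency.
  apply (efficiency_from_bounds _ (- dpL Q) (- dpL X) (x j) X (RInt p 0 X - p X * X)
           (sumN (rent C dC x) N) (sumN (fun n => x n * x n) N) s); try lra.
  - split; [apply Hx | apply sumN_term]; assumption.
  - apply (sumN_term (fun n => x n * x n)); [|assumption].
    intros n Hn. pose proof (Hx n Hn). nra.
  - exact (inframarginal_surplus_lower p X _ Hp Hconv (proj1 (Hpd X HX)) HX).
  - apply sumN_nonneg. intros n Hn. now apply (rent_nonneg N).
  - split; [apply Rmax_l|]. pose proof (Hx j Hj). apply Rmax_lub; nra.
  - pose proof (candidate_welfare_lower N C dC p dpL dpR x Hp Hcand) as Hlow.
    fold X in Hlow. lra.
  - exact (optimal_welfare_pos N C dC p xS HA1 Hp HA4 HxS).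
  - apply (welfare_upper_convex_demand N C dC p x xS Q c s); try assumption; try lra.
    + apply HxS.
    + apply Rmax_l.
    + apply Rmax_r.
Qed.
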